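(* There is an algorithm which, given integers $m\ge 2$ and $n_1>n_2>\dots>n_m\ge 0$ and reals $\phi>0$, $\mu>0$, $q\in[0,1]$, outputs numbers $(u_i,v_i)_{i\in[m]}$ realized by a pure strategy profile that maximizes the total traffic rate $TR$, and runs in time $O(mn^2)$, where $n=\sum_{i=1}^m n_i$.
   Context: Network model: there are $m$ source nodes $s_1,\dots,s_m$ and one destination $d$. Source $s_i$ has a set $N_i$ of $n_i$ users; $n=\sum_i n_i$. Each user generates an independent Poisson flow of packets of rate $\phi>0$; each direct link $(s_i,d)$ has service rate $\mu>0$; each sidelink $(s_i,s_j)$ loses packets independently with probability $q\in[0,1]$, and $\bar q=1-q$. A pure strategy of a user in $N_i$ is a route: either the direct path (DP) $(s_i,d)$ or an indirect path (IP) $(s_i,s_j,d)$ for some $j\neq i$. For a pure strategy profile $\mathbf p$, $u_i$ is the number of users of $N_i$ choosing DP and $v_i$ is the number of users of other sources choosing an IP $(s_j,s_i,d)$, $j\ne i$. The traffic rate on link $(s_i,d)$ is $T_i=u_i\phi+v_i\bar q\phi$, and the total traffic rate is $TR(\mathbf p)=\sum_{i=1}^m \frac{\mu T_i}{T_i+\mu}$. An optimal solution is a pure strategy profile maximizing $TR$. *)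

From HB Require Import structures.
From mathcomp Require Import all_boot all_order all_algebra.
Set Implicit Arguments.
Unset Strict Implicit.
Unset Printing Implicit Defensive.
Import Order.TTheory GRing.Theory Num.Theory.
Local Open Scope ring_scope.

(* Network model.  Sources are indexed by 'I_m (source s_{i+1} is i),  *)
(* users of source i by 'I_(ns i).  A route of a user of source i is   *)
(* encoded by an index j : 'I_m : j = i means the direct path (s_i,d), *)
(* j <> i means the indirect path (s_i, s_j, d).                       *)
Section Network.
Variables (R : realFieldType) (m : nat) (ns : 'I_m -> nat) (phi mu q : R).

Definition profile := forall i : 'I_m, 'I_(ns i) -> 'I_m.

Definition uu (p : profile) (i : 'I_m) : nat :=
  #|[pred k : 'I_(ns i) | p i k == i]|.

Definition vv (p : profile) (i : 'I_m) : nat :=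
  (\sum_(j < m | j != i) #|[pred k : 'I_(ns j) | p j k == i]|)%N.

Definition traffic (p : profile) (i : 'I_m) : R :=
  (uu p i)%:R * phi + (vv p i)%:R * (1 - q) * phi.

Definition TR (p : profile) : R :=
  \sum_(i < m) (mu * traffic p i / (traffic p i + mu)).

Definition optimal (p : profile) : Prop := forall p' : profile, TR p' <= TR p.

End Network.

(* Cost model: a real-RAM.  Two memories of registers indexed by nat:  *)
(* natural-number registers and real registers; indirect addressing;   *)
(* unit cost per executed instruction.                                 *)
Inductive instr : Type :=
| INConst (d k : nat)
| INAdd (d a b : nat)
| INSub (d a b : nat)          (* N[d] := N[a] - N[b] (trunc.) *)
| INMul (d a b : nat)
| INDiv (d a b : nat)
| INLoad (d a : nat)
| INStore (a s : nat)
| IRofN (d a : nat)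
| IRAdd (d a b : nat)
| IRSub (d a b : nat)
| IRMul (d a b : nat)
| IRDiv (d a b : nat)
| IRLoad (d a : nat)
| IRStore (a s : nat)
| IJmp (t : nat)
| IJltN (a b t : nat)
| IJltR (a b t : nat)
| IHalt.

Section Machine.
Variable R : realFieldType.

Record state := State { pc : nat; nmem : nat -> nat; rmem : nat -> R }.

Definition updN (f : nat -> nat) (d v : nat) : nat -> nat :=
  fun k => if k == d then v else f k.
Definition updR (f : nat -> R) (d : nat) (v : R) : nat -> R :=
  fun k => if k == d then v else f k.

(* One step; None when the machine has halted (Halt or pc out of range). *)
Definition step (P : seq instr) (s : state) : option state :=
  let N := nmem s in let Rm := rmem s in let nx := (pc s).+1 in
  match nth IHalt P (pc s) with
  | INConst d k => Some (State nx (updN N d k) Rm)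
  | INAdd d a b => Some (State nx (updN N d (N a + N b)%N) Rm)
  | INSub d a b => Some (State nx (updN N d (N a - N b)%N) Rm)
  | INMul d a b => Some (State nx (updN N d (N a * N b)%N) Rm)
  | INDiv d a b => Some (State nx (updN N d (N a %/ N b)%N) Rm)
  | INLoad d a => Some (State nx (updN N d (N (N a))) Rm)
  | INStore a s0 => Some (State nx (updN N (N a) (N s0)) Rm)
  | IRofN d a => Some (State nx N (updR Rm d (N a)%:R))
  | IRAdd d a b => Some (State nx N (updR Rm d (Rm a + Rm b)))
  | IRSub d a b => Some (State nx N (updR Rm d (Rm a - Rm b)))
  | IRMul d a b => Some (State nx N (updR Rm d (Rm a * Rm b)))
  | IRDiv d a b => Some (State nx N (updR Rm d (Rm a / Rm b)))
  | IRLoad d a => Some (State nx N (updR Rm d (Rm (N a))))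
  | IRStore a s0 => Some (State nx N (updR Rm (N a) (Rm s0)))
  | IJmp t => Some (State t N Rm)
  | IJltN a b t => Some (State (if (N a < N b)%N then t else nx) N Rm)
  | IJltR a b t => Some (State (if Rm a < Rm b then t else nx) N Rm)
  | IHalt => None
  end.

(* exec P k s = Some s' iff P started in s halts within at most k steps,
   in final state s'. *)
Fixpoint exec (P : seq instr) (fuel : nat) (s : state) : option state :=
  match step P s with
  | None => Some s
  | Some s' => match fuel with 0 => None | f.+1 => exec P f s' end
  end.

End Machine.

(* Input encoding: N[0] = m, N[1+i] = n_{i+1} (i < m), all other N cells 0;
   R[0] = phi, R[1] = mu, R[2] = q, all other R cells 0; pc = 0. *)
Definition init_nmem (m : nat) (ns : 'I_m -> nat) (k : nat) : nat :=
  if k == 0%N then m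
  else match (insub k.-1 : option 'I_m) with Some i => ns i | None => 0%N end.

Definition init_rmem (R : realFieldType) (phi mu q : R) (k : nat) : R :=
  if k == 0%N then phi else if k == 1%N then mu else if k == 2%N then q else 0.

Definition init_state (R : realFieldType) (m : nat) (ns : 'I_m -> nat)
  (phi mu q : R) : state R :=
  State 0 (init_nmem ns) (init_rmem phi mu q).

From HB Require Import structures.
From mathcomp Require Import all_boot all_order all_algebra.
From mathcomp Require Import ring lra zify.
Import Order.TTheory GRing.Theory Num.Theory.
Local Open Scope ring_scope.
Set Implicit Arguments.
Unset Strict Implicit.
Unset Printing Implicit Defensive.

(* A link s_i -> d used by y routes (the direct paths of N_i plus the indirect
   paths through s_i) carries traffic at most
   T_i(y) = phi (min(y, n_i) + (y - n_i)^+ (1 - q)), with equality when s_i keeps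
   its own users on the direct path first.  Hence TR <= sum_i f(T_i(y_i)) with
   f(T) = mu T / (T + mu) and sum_i y_i = n.  As f is concave increasing and T_i
   has nonincreasing increments, each y |-> f(T_i(y)) is concave, so this
   separable concave allocation is maximised by handing out the n units one at a
   time to a link of largest marginal gain, and the resulting allocation is
   realised by a profile.  The program runs exactly this greedy: n rounds, each
   an argmax scan over the m links, i.e. O(mn) steps. *)

(** * Routing profiles *)

Section Profiles.
Variables (m : nat) (ns : 'I_m -> nat).
Implicit Types (p : profile ns) (i j a b : 'I_m).

Definition route_count p i j : nat := #|[pred k : 'I_(ns i) | p i k == j]|.

Lemma uu_le p i : (uu p i <= ns i)%N.
Proof. by rewrite -[X in (_ <= X)%N]card_ord max_card. Qed.

Lemma sum_route_count p i : (\sum_j route_count p i j)%N = ns i.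
Proof.
rewrite /route_count -[RHS]card_ord -sum1_card (partition_big (p i) predT) //=.
by apply: eq_bigr => j _; rewrite -sum1_card; apply: eq_bigl => k; rewrite !inE.
Qed.

Lemma sum_uu_vv p : (\sum_i (uu p i + vv p i))%N = (\sum_i ns i)%N.
Proof.
have uv i : (uu p i + vv p i = \sum_j route_count p j i)%N by rewrite (bigD1 i).
under eq_bigr do rewrite uv.
by rewrite exchange_big; apply: eq_bigr => j _; exact: sum_route_count.
Qed.

Lemma card_eq_off (T : finType) (P Q : pred T) x :
  (forall y, y != x -> P y = Q y) -> (#|P| + Q x = #|Q| + P x)%N.
Proof.
move=> PQ; rewrite (cardD1 x P) (cardD1 x Q).
have -> : #|[predD1 P & x]| = #|[predD1 Q & x]|.
  apply: eq_card => y; rewrite !inE.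
  by case: (eqVneq y x) => //= /PQ; rewrite -!topredE => /= ->.
by rewrite -!topredE /=; lia.
Qed.

Definition reroute p i (k : 'I_(ns i)) j : profile ns :=
  fun a l => if (a == i) && (val l == val k) then j else p a l.

Lemma route_count_reroute p i k j a b : p i k = i ->
  (route_count (reroute p k j) a b + ((a == i) && (b == i))
   = route_count p a b + ((a == i) && (b == j)))%N.
Proof.
move=> pki; rewrite /route_count /reroute.
case: (eqVneq a i) => [->|_] //=.
have := @card_eq_off _ [pred l | (if l == k then j else p i l) == b]
  [pred l | p i l == b] k.
rewrite /= eqxx pki [(i == b)]eq_sym [(j == b)]eq_sym; apply=> l /negbTE.
by rewrite -[l == k]/(val l == val k) => ->.
Qed.

Lemma reroute_uu_vv p i k j a : p i k = i -> j != i ->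
  (uu (reroute p k j) a + (a == i) = uu p a)%N /\
  vv (reroute p k j) a = (vv p a + (a == j))%N.
Proof.
move=> pki ji; split.
  have nij : (a == i) && (a == j) = false.
    by apply/negbTE/andP => -[/eqP-> /eqP ij]; rewrite ij eqxx in ji.
  by have := @route_count_reroute p i k j a a pki; rewrite andbb nij addn0.
have term c : c != a ->
    route_count (reroute p k j) c a = (route_count p c a + ((c == i) && (a == j)))%N.
  move=> ca; have cai : (c == i) && (a == i) = false.
    by apply/negbTE/andP => -[/eqP ci /eqP ai]; rewrite ci ai eqxx in ca.
  by have := @route_count_reroute p i k j c a pki; rewrite cai addn0.
rewrite /vv (eq_bigr _ term) big_split /=; congr (_ + _)%N.
case: (eqVneq a j) => [aj|_]; last by rewrite big1 // => c _; rewrite andbF.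
rewrite (bigD1 i) /=; last by rewrite aj eq_sym.
by rewrite eqxx big1 // => c /andP [_ /negbTE ->].
Qed.

Lemma sum_indicator (F : 'I_m -> nat) i :
  (\sum_a (F a + (a == i)) = (\sum_a F a).+1)%N.
Proof.
rewrite big_split /= -addn1; congr (_ + _)%N.
by rewrite (bigD1 i) //= eqxx big1 // => a /negbTE ->.
Qed.

Definition direct_profile : profile ns := fun i _ => i.

Lemma direct_profile_counts i : uu direct_profile i = ns i /\ vv direct_profile i = 0%N.
Proof.
split; first by rewrite -[RHS]card_ord; apply: eq_card => k; rewrite !inE eqxx.
by rewrite /vv big1 // => j ji; apply: eq_card0 => k; rewrite !inE (negbTE ji).
Qed.

(* Induction on the number of indirect routes: realise the counts with one more
   direct user at a source with spare users and one indirect user fewer at a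
   link that has some, then reroute that direct user to that link. *)
Lemma profile_of_counts (U V : 'I_m -> nat) :
  (forall i, U i <= ns i)%N -> (forall i, 0 < V i -> U i = ns i)%N ->
  (\sum_i (ns i - U i) = \sum_i V i)%N ->
  exists p, forall i, uu p i = U i /\ vv p i = V i.
Proof.
have [S sV] : exists S, (\sum_i V i)%N = S by eexists.
elim: S U V sV => [|S IH] U V sV hU hUV sU.
  have V0 i : V i = 0%N by move/eqP: sV; rewrite sum_nat_eq0 => /forallP /(_ i) /eqP.
  have U0 i : (ns i - U i = 0)%N.
    by move: sU; rewrite sV => /eqP; rewrite sum_nat_eq0 => /forallP /(_ i) /eqP.
  exists direct_profile => i; have [-> ->] := direct_profile_counts i.
  by rewrite V0; have := U0 i; have := hU i; lia.
have [j Vj] : exists j, (0 < V j)%N.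
  apply/existsP; apply: contraT; rewrite negb_exists => /forallP V0.
  by move: sV; rewrite big1 // => a _; have := V0 a; lia.
have [i Ui] : exists i, (U i < ns i)%N.
  apply/existsP; apply: contraT; rewrite negb_exists => /forallP U0.
  by move: sU; rewrite sV big1 // => a _; have := U0 a; have := hU a; lia.
have ji : j != i by apply: contraTneq Ui => <-; rewrite hUV ?ltnn.
pose U' a := (U a + (a == i))%N; pose V' a := (V a - (a == j))%N.
have VV' a : V a = (V' a + (a == j))%N by rewrite /V'; case: eqP => [->|]; lia.
have UU' a : (ns a - U a = ns a - U' a + (a == i))%N.
  by rewrite /U'; case: eqP => [->|]; lia.
have [p' Hp'] : exists p' : profile ns, forall a, uu p' a = U' a /\ vv p' a = V' a.
  apply: IH.
  - by apply/eqP; rewrite -eqSS -sV (eq_bigr _ (fun a _ => VV' a)) sum_indicator.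
  - by move=> a; rewrite /U'; case: eqP => [->|]; [lia | have := hU a; lia].
  - move=> a; rewrite /U' /V' => Va; have Ua : U a = ns a by apply: hUV; lia.
    have -> : (a == i) = false by apply: contraTF Ui => /eqP <-; rewrite Ua ltnn.
    by rewrite addn0.
  - apply/eqP; rewrite -eqSS -(sum_indicator (fun a => ns a - U' a)%N i).
    rewrite -(eq_bigr _ (fun a _ => UU' a)) sU (eq_bigr _ (fun a _ => VV' a)).
    by rewrite sum_indicator.
have [k pki] : exists k : 'I_(ns i), p' i k == i.
  have : (0 < uu p' i)%N by rewrite (proj1 (Hp' i)) /U' eqxx addn1.
  by move/card_gt0P => [k]; rewrite inE; exists k.
exists (reroute p' k j) => a; have [hu hv] := reroute_uu_vv a (eqP pki) ji.
have [uu' vv'] := Hp' a.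
by split; [move: hu | rewrite hv]; rewrite ?uu' ?vv' /U' -?VV'; lia.
Qed.

End Profiles.

(** * Separable concave allocation *)

Section ConcaveAllocation.
Variables (R : realDomainType) (m : nat) (h : 'I_m -> nat -> R).

Definition increment i y := h i y.+1 - h i y.

Hypothesis increment_nonincr : forall i y, increment i y.+1 <= increment i y.

Lemma increment_le i y z : (y <= z)%N -> increment i z <= increment i y.
Proof.
move/subnK <-; elim: (z - y)%N => [|d IH] //.
by rewrite addSn (le_trans (increment_nonincr _ _)).
Qed.

Lemma concave_le_tangent i x y lam :
  increment i x <= lam -> ((0 < x)%N -> lam <= increment i x.-1) ->
  h i y - h i x <= lam * ((y%:R : R) - x%:R).
Proof.
move=> incr_le le_decr; case: (leqP x y) => [xy | yx].
  rewrite -(telescope_sumr _ xy) -natrB // mulr_natr -sumr_const_nat.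
  apply: ler_sum_nat => k /andP [xk _].
  exact: le_trans (increment_le i xk) incr_le.
have x0 : (0 < x)%N by apply: leq_ltn_trans yx.
rewrite -opprB -(telescope_sumr _ (ltnW yx)) -[_%:R - _]opprB mulrN lerN2.
rewrite -natrB ?(ltnW yx) // mulr_natr -sumr_const_nat.
apply: ler_sum_nat => k /andP [_ kx].
apply: le_trans (le_decr x0) (increment_le i _); lia.
Qed.

Definition exchange_stable (x : 'I_m -> nat) :=
  forall i j, (0 < x i)%N -> increment j (x j) <= increment i (x i).-1.

Lemma exchange_stable_bump x b : exchange_stable x ->
  (forall j, increment j (x j) <= increment b (x b)) ->
  exchange_stable (fun i => x i + (i == b))%N.
Proof.
move=> stable best i j.
case: (eqVneq i b) => [->|_]; case: (eqVneq j b) => [->|_]; rewrite ?addn0 ?addn1 /=.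
- by move=> _; exact: increment_nonincr.
- by move=> _; exact: best.
- by move=> xi; exact: le_trans (increment_nonincr _ _) (stable _ _ xi).
- exact: stable.
Qed.

Lemma greedy_allocation_max (x y : 'I_m -> nat) :
  (\sum_i x i = \sum_i y i)%N -> exchange_stable x ->
  \sum_i h i (y i) <= \sum_i h i (x i).
Proof.
move=> sxy exch; case: (pickP (@predT 'I_m)) => [i0 _|empty]; last first.
  by rewrite !big1 // => i; have := empty i.
have [j _ jmax] := @arg_maxP _ _ _ i0 predT (fun j => increment j (x j)) isT.
rewrite -subr_le0 -sumrB.
have tangent i : h i (y i) - h i (x i)
    <= increment j (x j) * ((y i)%:R - (x i)%:R).
  by apply: concave_le_tangent => [|xi]; [exact: jmax | exact: exch].
apply: le_trans (ler_sum _ (fun i _ => tangent i)) _.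
by rewrite -mulr_sumr sumrB -!natr_sum sxy subrr mulr0.
Qed.

End ConcaveAllocation.

(** * A single link *)

Section Link.
Variables (R : realFieldType) (phi mu q : R).

Definition throughput (T : R) : R := mu * T / (T + mu).

Definition link_traffic (u v : nat) : R := phi * (u%:R + v%:R * (1 - q)).

Definition best_traffic (n y : nat) : R := link_traffic (minn y n) (y - n).

Definition traffic_step (n y : nat) : R := if (y < n)%N then phi else phi * (1 - q).

Definition link_gain (n y : nat) : R :=
  throughput (best_traffic n y + traffic_step n y) - throughput (best_traffic n y).

Lemma best_traffic_succ n y :
  best_traffic n y.+1 = best_traffic n y + traffic_step n y.
Proof.
rewrite /best_traffic /link_traffic /traffic_step; case: ifP => yn.
  have -> : minn y.+1 n = y.+1 by lia.
  have -> : minn y n = y by lia.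
  have -> : (y.+1 - n = y - n)%N by lia.
  by rewrite -natr1; ring.
have -> : minn y.+1 n = minn y n by lia.
have -> : (y.+1 - n = (y - n).+1)%N by lia.
by rewrite -natr1; ring.
Qed.

Lemma link_gainE n y :
  link_gain n y = throughput (best_traffic n y.+1) - throughput (best_traffic n y).
Proof. by rewrite best_traffic_succ. Qed.

Hypotheses (phi_gt0 : 0 < phi) (mu_gt0 : 0 < mu) (q_ge0 : 0 <= q) (q_le1 : q <= 1).

Lemma link_traffic_ge0 u v : 0 <= link_traffic u v.
Proof.
by rewrite /link_traffic mulr_ge0 ?addr_ge0 ?mulr_ge0 ?subr_ge0 // ltW.
Qed.

Lemma traffic_step_ge0 n y : 0 <= traffic_step n y.
Proof. by rewrite /traffic_step; case: ifP => _; rewrite ?mulr_ge0 ?subr_ge0 // ltW. Qed.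

Lemma traffic_step_nonincr n y : traffic_step n y.+1 <= traffic_step n y.
Proof.
rewrite /traffic_step; case: ifP => [/ltnW ->|_]; first by rewrite lexx.
by case: ifP => _; rewrite ?lexx // ger_pMr // lerBlDr lerDl.
Qed.

Lemma throughput_increment (a s : R) : 0 <= a -> 0 <= s ->
  throughput (a + s) - throughput a = mu * mu * s / ((a + mu) * (a + s + mu)).
Proof.
(* [lra] does not use section hypotheses, hence the local copy [mu0]. *)
move=> a0 s0; rewrite /throughput; have := mu_gt0 => mu0.
have p1 : 0 < a + mu by lra.
have p2 : 0 < a + s + mu by lra.
by field; rewrite !lt0r_neq0.
Qed.

Lemma throughput_increment_le (a b s s' : R) : 0 <= a -> a <= b -> 0 <= s' -> s' <= s ->
  throughput (b + s') - throughput b <= throughput (a + s) - throughput a.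
Proof.
move=> a0 ab s'0 s's; have := mu_gt0 => mu0.
rewrite !throughput_increment //; try lra.
rewrite ler_pdivrMr ?mulr_gt0 //; try lra.
rewrite [X in _ <= X]mulrAC ler_pdivlMr ?mulr_gt0 //; try lra.
rewrite -!mulrA !ler_pM2l // mulrCA [s * _]mulrCA.
apply: ler_pM; rewrite ?mulr_ge0 ?lerD2r //; try lra.
nra.
Qed.

Lemma throughput_le (a b : R) : 0 <= a -> a <= b -> throughput a <= throughput b.
Proof.
move=> a0 ab; have := mu_gt0 => mu0.
have := @throughput_increment a (b - a) a0; rewrite subr_ge0 (addrC a) subrK => /(_ ab).
rewrite -subr_ge0 => ->; apply: divr_ge0; last by rewrite mulr_ge0 //; lra.
by rewrite mulr_ge0 ?subr_ge0 // mulr_ge0 // ltW.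
Qed.

Lemma link_gain_nonincr n y : link_gain n y.+1 <= link_gain n y.
Proof.
rewrite /link_gain best_traffic_succ; apply: throughput_increment_le.
- exact: link_traffic_ge0.
- by rewrite lerDl traffic_step_ge0.
- exact: traffic_step_ge0.
- exact: traffic_step_nonincr.
Qed.

End Link.

(** * Optimality of the greedy allocation *)

Section Optimum.
Variables (R : realFieldType) (m : nat) (ns : 'I_m -> nat) (phi mu q : R).
Hypotheses (phi_gt0 : 0 < phi) (mu_gt0 : 0 < mu) (q_ge0 : 0 <= q) (q_le1 : q <= 1).

Lemma traffic_le_best (p : profile ns) i :
  traffic phi q p i <= best_traffic phi q (ns i) (uu p i + vv p i).
Proof.
have := uu_le p i; rewrite /traffic /best_traffic /link_traffic.
move: (uu p i) (vv p i) => u v un.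
have -> : minn (u + v) (ns i) = (u + (minn v (ns i - u)))%N by lia.
have -> : (u + v - ns i = v - minn v (ns i - u))%N by lia.
have := geq_minl v (ns i - u); move: (minn _ _) => w /natrB ->.
have := mulr_ge0 (mulr_ge0 (ltW phi_gt0) q_ge0) (ler0n R w); rewrite natrD; lra.
Qed.

Lemma TR_le_best (p : profile ns) :
  TR phi mu q p <= \sum_i throughput mu (best_traffic phi q (ns i) (uu p i + vv p i)).
Proof.
apply: ler_sum => i _; apply: throughput_le => //; last exact: traffic_le_best.
by rewrite /traffic addr_ge0 ?mulr_ge0 ?subr_ge0 ?ler0n // ltW.
Qed.

Definition link_rate i y := throughput mu (best_traffic phi q (ns i) y).

Lemma increment_link_rate i y : increment link_rate i y = link_gain phi mu q (ns i) y.
Proof. by rewrite /increment /link_rate link_gainE. Qed.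

Lemma link_rate_increment_nonincr i y :
  increment link_rate i y.+1 <= increment link_rate i y.
Proof. by rewrite !increment_link_rate link_gain_nonincr. Qed.

Lemma optimal_of_greedy (x : 'I_m -> nat) :
  (\sum_i x i = \sum_i ns i)%N -> exchange_stable link_rate x ->
  exists p : profile ns, optimal phi mu q p /\
    forall i, uu p i = minn (x i) (ns i) /\ vv p i = (x i - ns i)%N.
Proof.
move=> sx exch.
have [p Hp] : exists p : profile ns,
    forall i, uu p i = minn (x i) (ns i) /\ vv p i = (x i - ns i)%N.
  apply: profile_of_counts => [i | i | ]; first exact: geq_minr.
    by move=> ?; lia.
  apply/eqP; rewrite -(eqn_add2r (\sum_i x i)) -big_split [X in _ == _ + X]sx -big_split /=.
  by apply/eqP/eq_bigr => i _; lia.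
exists p; split => // p'.
have TRp : TR phi mu q p = \sum_i link_rate i (x i).
  apply: eq_bigr => i _; rewrite /link_rate /traffic /best_traffic /link_traffic.
  by have [-> ->] := Hp i; congr throughput; ring.
rewrite TRp; apply: le_trans (TR_le_best p') _.
apply: greedy_allocation_max => //; first exact: link_rate_increment_nonincr.
by rewrite sx sum_uu_vv.
Qed.

End Optimum.

Section Runs.
Variables (R : realFieldType) (P : seq instr).

Fixpoint run (k : nat) (s : state R) : option (state R) :=
  if k is k'.+1 then (if step P s is Some s' then run k' s' else None) else Some s.

Lemma run_S k s : run k.+1 s = if step P s is Some s' then run k s' else None.
Proof. by []. Qed.

Lemma run_0 s : run 0 s = Some s.
Proof. by []. Qed.

Lemma run_add k1 k2 s : run (k1 + k2) s = obind (run k2) (run k1 s).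
Proof. by elim: k1 s => [|k IH] s //=; case: (step P s). Qed.

Lemma exec_of_run k fuel s s' : run k s = Some s' -> step P s' = None ->
  (k <= fuel)%N -> exec P fuel s = Some s'.
Proof.
elim: k fuel s => [|k IH] fuel s.
  by case=> <- halt _; case: fuel => /=; rewrite halt.
rewrite run_S; case e: (step P s) => [s1|] //= r halt.
by case: fuel => [|fuel] //= kf; rewrite e; apply: IH.
Qed.

Definition reach (s s' : state R) (B : nat) := exists2 k, (k <= B)%N & run k s = Some s'.

Lemma reach_trans s1 s2 s3 B1 B2 :
  reach s1 s2 B1 -> reach s2 s3 B2 -> reach s1 s3 (B1 + B2).
Proof.
move=> [k1 h1 r1] [k2 h2 r2]; exists (k1 + k2)%N; first exact: leq_add.
by rewrite run_add r1.
Qed.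

Lemma reach_le s s' B B' : (B <= B')%N -> reach s s' B -> reach s s' B'.
Proof. by move=> BB' [k kB r]; exists k => //; apply: leq_trans BB'. Qed.

Lemma reach_of_run k s s' : run k s = Some s' -> reach s s' k.
Proof. by exists k. Qed.

Lemma reach_iter (Inv : nat -> state R -> Prop) (c lo hi : nat) :
  (forall k s, (lo <= k < hi)%N -> Inv k s -> exists s', reach s s' c /\ Inv k.+1 s') ->
  forall s, (lo <= hi)%N -> Inv lo s -> exists s', reach s s' (c * (hi - lo)) /\ Inv hi s'.
Proof.
move=> body s lohi; have [d hd] : exists d, hi = (lo + d)%N by exists (hi - lo)%N; lia.
subst hi.
rewrite addKn; elim: d lo s body {lohi} => [|d IH] lo s body inv.
  by exists s; split; [exists 0%N | rewrite addn0].
have [|s1 [r1 inv1]] := body lo s _ inv; first lia.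
have [|s2 [r2 inv2]] := IH lo.+1 s1 _ inv1; first by move=> k s' kd; apply: body; lia.
by exists s2; rewrite mulnS -addSnnS; split => //; apply: reach_trans r1 r2.
Qed.

End Runs.

Arguments run : simpl never.

Ltac decide_nat :=
  repeat match goal with
  | |- context [ (?a < ?b)%N ] =>
      first [ rewrite (_ : (a < b)%N = true); last by apply/idP; lia
            | rewrite (_ : (a < b)%N = false); last by apply: negbTE; apply/negP; lia ]
  | |- context [ ?a == ?b ] =>
      first [ rewrite (_ : (a == b :> nat) = true); last by apply/eqP; lia
            | rewrite (_ : (a == b :> nat) = false); last by apply: negbTE; apply/eqP; lia ]
  end.

Ltac simulate simp :=
  repeat (rewrite run_S /= /updN /updR /=; decide_nat; simp); rewrite run_0; reflexivity.

(** * The greedy program *)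

(* N[0] holds m, N[1] the current loop index, N[3] = 1, N[4] = 0,
   N[5] = 32, N[6] the current argmax.  R[7] holds n, R[10] the number of users
   assigned so far, R[11] the best gain of the current scan, R[16] = 1 - q,
   R[17] = phi (1 - q).  Arrays live at stride 32, above every scratch cell:
   R[32 (i+1)] = n_i, N[32 (m+1+i)] = u_i, N[32 (2m+1+i)] = v_i, where u_i, v_i
   are min(x_i, n_i) and (x_i - n_i)^+ for the current allocation x.
   pc 0-13: copy the inputs n_i into R (n_0 and n_1 are saved first, as the loop
   uses N[1] and N[2] as scratch; with m >= 2 no output cell is clobbered);
   14-28: constants and R[7] := n; 29-85: n greedy rounds, each an argmax scan
   of the marginal gains (32-66) followed by the assignment of one user (67-85);
   86-97: copy u and v to the output cells. *)
Definition greedy_prog : seq instr := [::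
 (*0*) IRofN 3 1; IRofN 4 2; INConst 1 3; IJltN 0 1 12; INLoad 2 1;
 (*5*) IRofN 5 2; INConst 2 32; INMul 2 2 1; IRStore 2 5; INConst 2 1;
 (*10*) INAdd 1 1 2; IJmp 3; IRAdd 32 3 6; IRAdd 64 4 6; INConst 3 1;
 (*15*) IRofN 8 3; INConst 4 0; INConst 5 32; INConst 1 0; IRSub 16 8 2;
 (*20*) IRMul 17 0 16; IJltN 1 0 23; IJmp 29; INAdd 2 1 3; INMul 2 2 5;
 (*25*) IRLoad 9 2; IRAdd 7 7 9; INAdd 1 1 3; IJmp 21; IJltR 10 7 31;
 (*30*) IJmp 86; INConst 1 0; IJltN 1 0 34; IJmp 67; INAdd 2 0 1;
 (*35*) INAdd 2 2 3; INMul 7 2 5; INAdd 2 2 0; INMul 8 2 5; INLoad 9 7;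
 (*40*) INLoad 10 8; IRofN 12 9; IRofN 13 10; INAdd 2 1 3; INMul 2 2 5;
 (*45*) IRLoad 14 2; IRMul 18 13 16; IRAdd 18 12 18; IRMul 18 0 18; IJltR 12 14 52;
 (*50*) IRAdd 19 18 17; IJmp 53; IRAdd 19 18 0; IRAdd 20 19 1; IRMul 21 1 19;
 (*55*) IRDiv 21 21 20; IRAdd 20 18 1; IRMul 22 1 18; IRDiv 22 22 20; IRSub 23 21 22;
 (*60*) IJltN 1 3 63; IJltR 11 23 63; IJmp 65; INAdd 6 1 4; IRAdd 11 23 24;
 (*65*) INAdd 1 1 3; IJmp 32; INAdd 2 0 6; INAdd 2 2 3; INMul 7 2 5;
 (*70*) INAdd 2 2 0; INMul 8 2 5; INLoad 9 7; IRofN 12 9; INAdd 2 6 3;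
 (*75*) INMul 2 2 5; IRLoad 14 2; IJltR 12 14 82; INLoad 10 8; INAdd 10 10 3;
 (*80*) INStore 8 10; IJmp 84; INAdd 9 9 3; INStore 7 9; IRAdd 10 10 8;
 (*85*) IJmp 29; INAdd 1 0 3; INAdd 2 0 0; INAdd 0 2 1; IJltN 1 0 91;
 (*90*) IHalt; INConst 2 32; INMul 2 2 1; INLoad 2 2; INStore 1 2;
 (*95*) INConst 2 1; INAdd 1 1 2; IJmp 89].

Section GreedyProg.
Variables (R : realFieldType) (m : nat) (ns : 'I_m -> nat) (phi mu q : R).
Hypothesis m_ge2 : (2 <= m)%N.

Local Notation run := (run greedy_prog).
Local Notation reach := (@reach R greedy_prog).

Definition ns_at (k : nat) : nat := if insub k is Some i then ns i else 0%N.

Lemma ns_at_val (i : 'I_m) : ns_at i = ns i.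
Proof. by rewrite /ns_at valK. Qed.

Lemma init_nmem_out a : (m < a)%N -> init_nmem ns a = 0%N.
Proof.
move=> ma; rewrite /init_nmem; case: eqP => [a0|_]; first by move: ma; rewrite a0.
by rewrite insubF //; apply/negbTE; rewrite -leqNgt; lia.
Qed.

Record LoadInv (i : nat) (s : state R) : Prop := {
  load_pc : pc s = 3%N;
  load_m : nmem s 0 = m;
  load_i : nmem s 1 = i;
  load_inputs : forall a, (3 <= a)%N -> nmem s a = init_nmem ns a;
  load_phi : rmem s 0 = phi; load_mu : rmem s 1 = mu; load_q : rmem s 2 = q;
  load_ns0 : rmem s 3 = (ns_at 0)%:R; load_ns1 : rmem s 4 = (ns_at 1)%:R;
  load_scratch : forall a, (6 <= a < 32)%N -> rmem s a = 0;
  load_ns : forall j, (3 <= j < i)%N -> rmem s (32 * j)%N = (ns_at j.-1)%:R }.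

Lemma load_start : exists2 s, run 3 (init_state ns phi mu q) = Some s & LoadInv 3 s.
Proof.
eexists; first by simulate idtac.
split => //= [a a3 | a a6 | j j3]; decide_nat => //; first by rewrite /init_rmem; decide_nat.
lia.
Qed.

Lemma load_step i s : (3 <= i <= m)%N -> LoadInv i s ->
  exists s', reach s s' 9 /\ LoadInv i.+1 s'.
Proof.
case: s => pc0 N Rm hi [/= -> h0 h1 hin r0 r1 r2 r3 r4 rz rarr].
eexists; split; first by apply: reach_of_run; simulate ltac:(rewrite ?h0 ?h1).
split => /=; rewrite ?h1; decide_nat; rewrite ?h0 ?addn1 //.
- by move=> a a3; decide_nat; apply: hin.
- by move=> a a6; decide_nat; apply: rz.
move=> j ji; case: (eqVneq j i) => [->|ji'].
  by rewrite eqxx hin /init_nmem; decide_nat.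
by decide_nat; apply: rarr; lia.
Qed.

Record SumInv (k : nat) (s : state R) : Prop := {
  sum_pc : pc s = 21%N;
  sum_m : nmem s 0 = m;
  sum_k : nmem s 1 = k;
  sum_one : nmem s 3 = 1%N; sum_zero : nmem s 4 = 0%N; sum_stride : nmem s 5 = 32%N;
  sum_uv : forall a, (m < a)%N -> nmem s (32 * a)%N = 0%N;
  sum_phi : rmem s 0 = phi; sum_mu : rmem s 1 = mu;
  sum_acc : rmem s 7 = (\sum_(0 <= j < k) ns_at j)%N%:R;
  sum_rone : rmem s 8 = 1; sum_assigned : rmem s 10 = 0;
  sum_qbar : rmem s 16 = 1 - q; sum_phiqbar : rmem s 17 = phi * (1 - q);
  sum_rzero : rmem s 24 = 0;
  sum_ns : forall j, (j < m)%N -> rmem s (32 * (j + 1))%N = (ns_at j)%:R }.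

Lemma load_done s : LoadInv m.+1 s ->
  exists s', reach s s' 10 /\ SumInv 0 s'.
Proof.
case: s => pc0 N Rm [/= -> h0 h1 hin r0 r1 r2 r3 r4 rz rarr].
eexists; split; first by apply: reach_of_run; simulate ltac:(rewrite ?h0 ?h1).
split => //=; rewrite ?r0 ?r2 //.
- by move=> a ma; decide_nat; rewrite hin ?init_nmem_out //; lia.
- by rewrite rz // big_geq.
- by rewrite rz.
- by rewrite rz.
case=> [|[|j]] jm /=; decide_nat; first by rewrite r3 rz ?addr0.
  by rewrite r4 rz ?addr0.
by rewrite rarr ?addn1 //; lia.
Qed.

Lemma sum_step k s : (0 <= k < m)%N -> SumInv k s ->
  exists s', reach s s' 7 /\ SumInv k.+1 s'.
Proof.
case: s => pc0 N Rm km [/= -> h0 h1 h3 h4 h5 nz r0 r1 r7 r8 r10 r16 r17 r24 hns].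
eexists; split; first by apply: reach_of_run; simulate ltac:(rewrite ?h0 ?h1).
split => /=; rewrite ?h0 ?h1 ?h3 ?h4 ?h5 ?addn1 //.
- by move=> a ma; decide_nat; exact: nz.
- by rewrite r7 big_nat_recr //= natrD (mulnC k.+1) -(addn1 k) hns.
- by move=> j jm; decide_nat; exact: hns.
Qed.

Local Notation gain k y := (link_gain phi mu q (ns_at k) y).

Record GreedyMem (x : nat -> nat) (t : nat) (s : state R) : Prop := {
  mem_m : nmem s 0 = m;
  mem_one : nmem s 3 = 1%N; mem_zero : nmem s 4 = 0%N; mem_stride : nmem s 5 = 32%N;
  mem_u : forall i, (i < m)%N -> nmem s (32 * (m + 1 + i))%N = minn (x i) (ns_at i);
  mem_v : forall i, (i < m)%N -> nmem s (32 * (2 * m + 1 + i))%N = (x i - ns_at i)%N;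
  mem_phi : rmem s 0 = phi; mem_mu : rmem s 1 = mu;
  mem_n : rmem s 7 = (\sum_(i < m) ns i)%N%:R; mem_rone : rmem s 8 = 1;
  mem_assigned : rmem s 10 = t%:R;
  mem_qbar : rmem s 16 = 1 - q; mem_phiqbar : rmem s 17 = phi * (1 - q);
  mem_rzero : rmem s 24 = 0;
  mem_ns : forall j, (j < m)%N -> rmem s (32 * (j + 1))%N = (ns_at j)%:R }.

Definition scratch_only (s s' : state R) :=
  (forall a, (a = 0 \/ a = 3 \/ a = 4 \/ a = 5 \/ 10 < a)%N -> nmem s' a = nmem s a) /\
  (forall a, (a <= 10 \/ 15 <= a <= 17 \/ 24 <= a)%N -> rmem s' a = rmem s a).

Lemma scratch_only_trans s1 s2 s3 :
  scratch_only s1 s2 -> scratch_only s2 s3 -> scratch_only s1 s3.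
Proof.
by move=> [N12 R12] [N23 R23]; split => a a_out; [rewrite N23 ?N12 | rewrite R23 ?R12].
Qed.

Lemma GreedyMem_scratch x t s s' :
  GreedyMem x t s -> scratch_only s s' -> GreedyMem x t s'.
Proof.
move=> [h0 h3 h4 h5 hU hV r0 r1 r7 r8 r10 r16 r17 r24 hns] [sN sR].
split; rewrite ?sN ?sR //; try lia.
- by move=> i im; rewrite sN ?hU //; lia.
- by move=> i im; rewrite sN ?hV //; lia.
- by move=> j jm; rewrite sR ?hns //; lia.
Qed.

Definition best_so_far (x : nat -> nat) (k b : nat) (s : state R) :=
  [/\ (b < k)%N, nmem s 6 = b, rmem s 11 = gain b (x b) &
      forall j, (j < k)%N -> gain j (x j) <= rmem s 11].

Record ScanInv (x : nat -> nat) (t k b : nat) (s : state R) : Prop := {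
  scan_pc : pc s = 32%N;
  scan_mem : GreedyMem x t s;
  scan_k : nmem s 1 = k;
  scan_best : (0 < k)%N -> best_so_far x k b s }.

Lemma scan_gain x t k b s : ScanInv x t k b s -> (k < m)%N ->
  exists s1, [/\ reach s s1 26, scratch_only s s1 &
    [/\ pc s1 = 60%N, nmem s1 1 = k, (0 < k)%N -> best_so_far x k b s1
      & rmem s1 23 = gain k (x k)]].
Proof.
case: s => pc0 N Rm [/= -> [/= h0 h3 h4 h5 hU hV r0 r1 r7 r8 r10 r16 r17 r24 hns] h1 best] km.
have eU : N ((m + k + 1) * 32)%N = minn (x k) (ns_at k).
  by rewrite -hU // mulnC; congr N; lia.
have eV : N ((m + k + 1 + m) * 32)%N = (x k - ns_at k)%N.
  by rewrite -hV // mulnC; congr N; lia.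
have en : Rm ((k + 1) * 32)%N = (ns_at k)%:R by rewrite mulnC hns.
case cU : ((minn (x k) (ns_at k))%:R < (ns_at k)%:R :> R).
- eexists; split.
  + apply: reach_le (_ : 25 <= 26)%N _ => //; apply: reach_of_run.
    by simulate ltac:(rewrite ?h0 ?h1 ?h3 ?h5 ?eU ?eV ?en ?cU ?r0 ?r1 ?r16).
  + by split => a Ha /=; decide_nat.
  have xk : (x k < ns_at k)%N by move: cU; rewrite ltr_nat; lia.
  by split => //; rewrite /= /link_gain /traffic_step /best_traffic /link_traffic /throughput xk.
- eexists; split.
  + apply: reach_of_run.
    by simulate ltac:(rewrite ?h0 ?h1 ?h3 ?h5 ?eU ?eV ?en ?cU ?r0 ?r1 ?r16 ?r17).
  + by split => a Ha /=; decide_nat.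
  have xk : (x k < ns_at k)%N = false by apply/negbTE; move: cU; rewrite ltr_nat; lia.
  by split => //; rewrite /= /link_gain /traffic_step /best_traffic /link_traffic /throughput xk.
Qed.

Lemma scan_decide x t k b s : pc s = 60%N -> nmem s 1 = k -> GreedyMem x t s ->
  ((0 < k)%N -> best_so_far x k b s) -> rmem s 23 = gain k (x k) ->
  exists s' b', [/\ reach s s' 6, scratch_only s s', pc s' = 32%N, nmem s' 1 = k.+1
                  & best_so_far x k.+1 b' s'].
Proof.
case: s => pc0 N Rm /= -> n1 [_ /= n3 n4 _ _ _ _ _ _ _ _ _ _ r24 _] best r23.
have [k0 | kpos] := posnP k.
  eexists; exists k; split.
  - by apply: reach_le (_ : 5 <= 6)%N _ => //; apply: reach_of_run;
      simulate ltac:(rewrite ?n1 ?n3 ?n4 ?r23 ?r24 ?addr0 ?addn0 ?addn1).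
  - by split => a Ha /=; decide_nat.
  all: rewrite /= ?n1 ?n3 ?addn1 //.
  by split => /=; decide_nat; rewrite ?n1 ?n4 ?r23 ?r24 ?addn0 ?addr0 // => j jk;
    have -> : j = k by lia.
have [lt_b_k n6 r11 best_le] := best kpos.
case c : (Rm 11 < Rm 23).
  have lt11 : Rm 11 < gain k (x k) by rewrite -r23 c.
  eexists; exists k; split.
  - by apply: reach_of_run; simulate ltac:(rewrite ?c ?n1 ?n3 ?n4 ?r23 ?r24 ?addr0 ?addn0 ?addn1).
  - by split => a Ha /=; decide_nat.
  all: rewrite /= ?n1 ?n3 ?addn1 //.
  split => /=; decide_nat; rewrite ?n1 ?n4 ?r23 ?r24 ?addn0 ?addr0 // => j jk.
  case: (eqVneq j k) => [-> //|jk'].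
  by apply: le_trans (best_le j _) (ltW lt11); lia.
eexists; exists b; split.
- by apply: reach_le (_ : 5 <= 6)%N _ => //; apply: reach_of_run;
    simulate ltac:(rewrite ?c ?n1 ?n3 ?n4 ?r23 ?r24 ?addr0 ?addn0 ?addn1).
- by split => a Ha /=; decide_nat.
all: rewrite /= ?n1 ?n3 ?addn1 //.
split => /=; decide_nat; rewrite ?n6 ?r11 // => j jk.
case: (eqVneq j k) => [->|jk']; first by rewrite -r23 leNgt c.
by apply: best_le; lia.
Qed.

Lemma scan_step x t k s : (0 <= k < m)%N -> (exists b, ScanInv x t k b s) ->
  exists s', reach s s' 32 /\ exists b', ScanInv x t k.+1 b' s'.
Proof.
move=> /andP [_ km] [b inv].
have [s1 [r1 fr1 [pc1 n1 best1 r23]]] := scan_gain inv km.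
have mem1 := GreedyMem_scratch (scan_mem inv) fr1.
have [s2 [b' [r2 fr2 pc2 n12 best2]]] := scan_decide pc1 n1 mem1 best1 r23.
exists s2; split; first exact: reach_trans r1 r2.
by exists b'; split => //; apply: GreedyMem_scratch mem1 fr2.
Qed.

Definition bump (x : nat -> nat) (b : nat) (i : nat) : nat := (x i + (i == b))%N.

Record RoundInv (x : nat -> nat) (t : nat) (s : state R) : Prop := {
  round_pc : pc s = 29%N;
  round_mem : GreedyMem x t s;
  round_sum : (\sum_(i < m) x i)%N = t;
  round_stable : exchange_stable (link_rate ns phi mu q) (fun i : 'I_m => x i) }.

Lemma sum_done s : SumInv m s -> exists s', reach s s' 2 /\ RoundInv (fun=> 0%N) 0 s'.
Proof.
case: s => pc0 N Rm [/= -> h0 h1 h3 h4 h5 nz r0 r1 r7 r8 r10 r16 r17 r24 hns].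
eexists; split; first by apply: reach_of_run; simulate ltac:(rewrite ?h0 ?h1).
split => //; last by rewrite big1.
split => //= [i im | i im |]; rewrite ?nz //; try lia.
by rewrite r7 big_mkord; congr _%:R; apply: eq_bigr => i _; rewrite ns_at_val.
Qed.

Lemma round_start x t s : (t < \sum_(i < m) ns i)%N -> RoundInv x t s ->
  exists s', reach s s' 2 /\ ScanInv x t 0 0 s'.
Proof.
case: s => pc0 N Rm tn [/= -> mem _ _].
have [_ _ _ _ _ _ _ _ /= r7 _ /= r10 _ _ _ _] := mem.
have c : (t%:R < (\sum_(i < m) ns i)%N%:R :> R) by rewrite ltr_nat.
eexists; split; first by apply: reach_of_run; simulate ltac:(rewrite /= ?r7 ?r10 ?c).
by split => //; apply: GreedyMem_scratch mem _; split => a a_out /=; decide_nat.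
Qed.

Hypotheses (phi_gt0 : 0 < phi) (mu_gt0 : 0 < mu) (q_ge0 : 0 <= q) (q_le1 : q <= 1).

Lemma round_commit (x : nat -> nat) t b s : (\sum_(i < m) x i)%N = t ->
  exchange_stable (link_rate ns phi mu q) (fun i : 'I_m => x i) ->
  ScanInv x t m b s -> exists s', reach s s' 19 /\ RoundInv (bump x b) t.+1 s'.
Proof.
case: s => pc0 N Rm sx stable [/= -> mem h1 best].
have [bm /= h6 /= h11 best_le] := best (ltnW m_ge2).
move: (mem) => [/= h0 h3 h4 h5 hU hV r0 r1 r7 r8 r10 r16 r17 r24 hns].
have eU : N ((m + b + 1) * 32)%N = minn (x b) (ns_at b).
  by rewrite -hU // mulnC; congr N; lia.
have eV : N ((m + b + 1 + m) * 32)%N = (x b - ns_at b)%N.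
  by rewrite -hV // mulnC; congr N; lia.
have en : Rm ((b + 1) * 32)%N = (ns_at b)%:R by rewrite mulnC hns.
have stable' : exchange_stable (link_rate ns phi mu q) (fun i : 'I_m => bump x b i).
  apply: (exchange_stable_bump (link_rate_increment_nonincr _ _ _ _ _)
    (b := Ordinal bm)) => // j.
  by rewrite !increment_link_rate -!ns_at_val /= -h11 best_le.
have sum' : (\sum_(i < m) bump x b i)%N = t.+1.
  by rewrite -sx -(sum_indicator _ (Ordinal bm)).
case cU : ((minn (x b) (ns_at b))%:R < (ns_at b)%:R :> R).
- have xb : (x b < ns_at b)%N by move: cU; rewrite ltr_nat; lia.
  eexists; split.
    apply: reach_le (_ : 17 <= 19)%N _ => //; apply: reach_of_run.
    by simulate ltac:(rewrite ?h0 ?h1 ?h3 ?h5 ?h6 ?eU ?eV ?en ?cU ?r8 ?r10).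
  split => //; split => //=; decide_nat; rewrite ?h0 ?h3 ?h4 ?h5 ?r0 ?r1 ?r7 ?r16 ?r17 ?r24 ?natr1 //.
  + by move=> i im; rewrite /bump; case: (eqVneq i b) => [->|ib]; decide_nat; rewrite ?hU //; lia.
  + by move=> i im; rewrite /bump; case: (eqVneq i b) => [->|ib]; decide_nat; rewrite ?hV //; lia.
  + by move=> j jm; decide_nat; exact: hns.
have xb : (ns_at b <= x b)%N by move: cU; rewrite ltr_nat; lia.
eexists; split.
  by apply: reach_of_run; simulate ltac:(rewrite ?h0 ?h1 ?h3 ?h5 ?h6 ?eU ?eV ?en ?cU ?r8 ?r10).
split => //; split => //=; decide_nat; rewrite ?h0 ?h3 ?h4 ?h5 ?r0 ?r1 ?r7 ?r16 ?r17 ?r24 ?natr1 //.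
- by move=> i im; rewrite /bump; case: (eqVneq i b) => [->|ib]; decide_nat; rewrite ?hU //; lia.
- by move=> i im; rewrite /bump; case: (eqVneq i b) => [->|ib]; decide_nat; rewrite ?hV //; lia.
- by move=> j jm; decide_nat; exact: hns.
Qed.

Lemma round_step t s : (0 <= t < \sum_(i < m) ns i)%N -> (exists x, RoundInv x t s) ->
  exists s', reach s s' (32 * m + 21) /\ exists x, RoundInv x t.+1 s'.
Proof.
move=> /andP [_ tn] [x inv].
have [s1 [r1 scan0]] := round_start tn inv.
have [s2 [r2 [b scan]]] := @reach_iter _ _ (fun k s => exists b, ScanInv x t k b s)
  32 0 m (@scan_step x t) s1 (leq0n m) (ex_intro _ 0%N scan0).
have [s3 [r3 inv3]] := round_commit (round_sum inv) (round_stable inv) scan.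
exists s3; split; last by exists (bump x b).
by apply: reach_le (reach_trans (reach_trans r1 r2) r3); lia.
Qed.

Record CopyInv (x : nat -> nat) (a : nat) (s : state R) : Prop := {
  copy_pc : pc s = 89%N;
  copy_end : nmem s 0 = (m + m + (m + 1))%N;
  copy_a : nmem s 1 = a;
  copy_u : forall i, (i < m)%N -> nmem s (32 * (m + 1 + i))%N = minn (x i) (ns_at i);
  copy_v : forall i, (i < m)%N -> nmem s (32 * (2 * m + 1 + i))%N = (x i - ns_at i)%N;
  copy_out_u : forall i, (i < m)%N -> (m + 1 + i < a)%N ->
    nmem s (m + 1 + i) = minn (x i) (ns_at i);
  copy_out_v : forall i, (i < m)%N -> (2 * m + 1 + i < a)%N ->
    nmem s (2 * m + 1 + i) = (x i - ns_at i)%N }.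

Lemma greedy_done x s : RoundInv x (\sum_(i < m) ns i) s ->
  exists s', reach s s' 5 /\ CopyInv x (m + 1) s'.
Proof.
case: s => pc0 N Rm [/= -> [/= h0 h3 h4 h5 hU hV r0 r1 r7 r8 r10 r16 r17 r24 hns] _ _].
have c : ((\sum_(i < m) ns i)%N%:R < (\sum_(i < m) ns i)%N%:R :> R) = false by rewrite ltxx.
eexists; split; first by apply: reach_of_run; simulate ltac:(rewrite ?r7 ?r10 ?c ?h0 ?h3).
split => //= i im; decide_nat => //; [exact: hU | exact: hV].
Qed.

Lemma copy_step x a s : (m + 1 <= a < m + m + (m + 1))%N -> CopyInv x a s ->
  exists s', reach s s' 8 /\ CopyInv x a.+1 s'.
Proof.
case: s => pc0 N Rm am [/= -> h0 h1 hU hV oU oV].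
eexists; split; first by apply: reach_of_run; simulate ltac:(rewrite ?h0 ?h1).
split => /=; decide_nat; rewrite ?h0 //.
- by rewrite addn1.
- by move=> i im; decide_nat; exact: hU.
- by move=> i im; decide_nat; exact: hV.
- move=> i im ia; case: (eqVneq (m + 1 + i)%N a) => [<-|ai]; decide_nat.
    exact: hU.
  by apply: oU; lia.
- move=> i im ia; case: (eqVneq (2 * m + 1 + i)%N a) => [<-|ai]; decide_nat.
    exact: hV.
  by apply: oV; lia.
Qed.

Lemma copy_done x s : CopyInv x (m + m + (m + 1)) s ->
  exists s', [/\ run 1 s = Some s', step greedy_prog s' = None &
    forall i, (i < m)%N -> nmem s' (m + 1 + i) = minn (x i) (ns_at i) /\
                          nmem s' (2 * m + 1 + i) = (x i - ns_at i)%N].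
Proof.
case: s => pc0 N Rm [/= -> h0 h1 hU hV oU oV].
eexists; split; [by simulate ltac:(rewrite ?h0 ?h1) | by [] |].
by move=> i im; split; [apply: oU | apply: oV] => //; lia.
Qed.

Lemma greedy_prog_correct : (0 < \sum_(i < m) ns i)%N ->
  exists (x : nat -> nat) (s' : state R),
  [/\ exec greedy_prog (200 * (m * (\sum_(i < m) ns i) ^ 2)) (init_state ns phi mu q)
        = Some s',
      (\sum_(i < m) x i = \sum_(i < m) ns i)%N,
      exchange_stable (link_rate ns phi mu q) (fun i : 'I_m => x i) &
      forall i : 'I_m, nmem s' (m + 1 + i) = minn (x i) (ns i) /\
                       nmem s' (2 * m + 1 + i) = (x i - ns i)%N].
Proof.
set n := (\sum_(i < m) ns i)%N => n_gt0.
have [s0 r0 load0] := load_start.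
have [s1 [r1 load1]] := @reach_iter _ _ LoadInv 9 3 m.+1 load_step s0 m_ge2 load0.
have [s2 [r2 sum0]] := load_done load1.
have [s3 [r3 sum1]] := @reach_iter _ _ SumInv 7 0 m sum_step s2 (leq0n m) sum0.
have [s4 [r4 round0]] := sum_done sum1.
have [s5 [r5 [x round1]]] := @reach_iter _ _ (fun t s => exists x, RoundInv x t s)
  (32 * m + 21) 0 n round_step s4 (leq0n n) (ex_intro _ _ round0).
have [s6 [r6 copy0]] := greedy_done round1.
have [s7 [r7 copy1]] := @reach_iter _ _ (CopyInv x) 8 (m + 1) (m + m + (m + 1))
  (@copy_step x) s6 ltac:(lia) copy0.
have [s8 [r8 halt out]] := copy_done copy1.
have [k k_le run_k] := reach_trans (reach_trans (reach_trans (reach_trans (reach_trans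
  (reach_trans (reach_trans (reach_of_run r0) r1) r2) r3) r4) r5) r6) r7.
exists x, s8; split.
- apply: (@exec_of_run _ _ (k + 1)%N _ _ _ _ halt); first by rewrite run_add run_k.
  have n_nn : (n <= n * n)%N by rewrite leq_pmulr.
  have mn_mnn : (m * n <= m * (n * n))%N by rewrite leq_mul2l n_nn orbT.
  have m_mn : (m <= m * n)%N by rewrite leq_pmulr.
  have n_mn : (n <= m * n)%N by rewrite leq_pmull // ltnW.
  rewrite -mulnn; lia.
- exact: round_sum round1.
- exact: round_stable round1.
- by move=> i; rewrite -ns_at_val; apply: out.
Qed.

End GreedyProg.

Theorem theorem1 :
  exists (P : seq instr) (C : nat),
  forall (R : realFieldType) (m : nat) (ns : 'I_m -> nat) (phi mu q : R),
    (2 <= m)%N ->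
    (forall i j : 'I_m, (i < j)%N -> (ns j < ns i)%N) ->
    0 < phi -> 0 < mu -> 0 <= q <= 1 ->
    exists s' : state R,
      exec P (C * (m * (\sum_(i < m) ns i) ^ 2))%N (init_state ns phi mu q)
        = Some s' /\
      exists p : profile ns,
        optimal phi mu q p /\
        (forall i : 'I_m,
            nmem s' (m + 1 + i)%N = uu p i /\
            nmem s' (2 * m + 1 + i)%N = vv p i).
Proof.
exists greedy_prog, 200%N => R m ns phi mu q m_ge2 ns_decr phi_gt0 mu_gt0 /andP [q_ge0 q_le1].
(* The ordering of the n_i is used only to get n > 0. *)
have n_gt0 : (0 < \sum_(i < m) ns i)%N.
  have := ns_decr (Ordinal (ltnW m_ge2)) (Ordinal m_ge2) isT.
  by rewrite (bigD1 (Ordinal (ltnW m_ge2))) //=; lia.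
have [x [s' [exec_s' sum_x stable_x out]]] :=
  greedy_prog_correct m_ge2 phi_gt0 mu_gt0 q_ge0 q_le1 n_gt0.
have [p [opt_p counts]] := optimal_of_greedy phi_gt0 mu_gt0 q_ge0 q_le1 sum_x stable_x.
exists s'; split => //; exists p; split => // i.
by have [-> ->] := counts i; apply: out.
Qed.
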